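(* In the geometry $\Gamma_\mathbb{F}(\mathbb{A})$: (1) Two distinct lines $[x,u]$ and $[y,v]$ are coplanar (i.e. incident with a common plane) if and only if $(x|y)=(u|v)$; in that case the unique sharp $\mathbb{F}$-morphism $\phi:\mathbb{A}\to\mathbb{O}$ with $\phi(x)=u$ and $\phi(y)=v$ is the unique plane incident with both lines. (2) If two lines are incident with two distinct common points, then they are incident with exactly the same set of points.
   Context: $\mathbb{H}$ and $\mathbb{O}$ are the real quaternions and real octonions, with $\mathbb{C}\subset\mathbb{H}\subset\mathbb{O}$, norm $|\cdot|$, conjugation $x\mapsto\bar x$. Let $(\mathbb{F},\mathbb{A})$ be either $(\mathbb{R},\mathbb{H})$ or $(\mathbb{C},\mathbb{O})$. $\mathbb{A}$ and $\mathbb{O}$ are regarded as right $\mathbb{F}$-vector spaces via right multiplication by elements of $\mathbb{F}$. The real inner product is $(x|y)_\mathbb{R}=\mathrm{Re}(\bar x y)$; for $\mathbb{F}=\mathbb{R}$ put $(x|y)=(x|y)_\mathbb{R}$, and for $\mathbb{F}=\mathbb{C}$ let $(x|y)=(x|y)_\mathbb{C}$ be the $\mathbb{C}$-component of $\bar x y$ in the real-orthogonal decomposition $\mathbb{O}=\mathbb{C}\oplus\mathbb{C}^{\perp}$ (a Hermitian form with real part $(x|y)_\mathbb{R}$). Write $x\perp y$ if $(x|y)=0$. For $\mathbb{B}\in\{\mathbb{A},\mathbb{O}\}$, $\mathrm{Pu}_\mathbb{F}(\mathbb{B})$ is the real-orthogonal complement of $\mathbb{F}$ in $\mathbb{B}$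 (an $\mathbb{F}$-subspace; $\dim_\mathbb{F}\mathrm{Pu}_\mathbb{F}(\mathbb{A})=3$). A sharp $\mathbb{F}$-morphism $\mathbb{A}\to\mathbb{O}$ is an $\mathbb{F}$-linear multiplicative map preserving $(\cdot|\cdot)$. The geometry $\Gamma_\mathbb{F}(\mathbb{A})$ has: points the 1-dimensional $\mathbb{F}$-subspaces $[x]$ of $\mathrm{Pu}_\mathbb{F}(\mathbb{A})$; lines the sets $[x,u]=\{(xt,ut):t\in\mathbb{F}^*\}$ with $x\in\mathrm{Pu}_\mathbb{F}(\mathbb{A})$, $u\in\mathrm{Pu}_\mathbb{F}(\mathbb{O})$, $|x|=|u|\neq0$; planes the sharp $\mathbb{F}$-morphisms $\phi:\mathbb{A}\to\mathbb{O}$. Incidence: every point is incident with every plane; $[y]$ is incident with $[x,u]$ iff $(x|y)=0$; $[x,u]$ is incident with $\phi$ iff $\phi(x)=u$. It is a (flat) geometry of type $C_3$. *)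

(* Octonions are built by the Cayley--Dickson doubling
   R -> C -> H -> O, with product (a,b)(c,d) = (a c - conj(d) b, d a + b conj(c))
   and conjugation conj(a,b) = (conj a, -b). *)
From Stdlib Require Import Reals.
Open Scope R_scope.

Definition Cx : Type := (R * R)%type.
Definition Czero : Cx := (0, 0).
Definition Cone : Cx := (1, 0).
Definition Cadd (x y : Cx) : Cx := (fst x + fst y, snd x + snd y).
Definition Copp (x : Cx) : Cx := (- fst x, - snd x).
Definition Cmul (x y : Cx) : Cx :=
  (fst x * fst y - snd x * snd y, fst x * snd y + snd x * fst y).
Definition Cconj (x : Cx) : Cx := (fst x, - snd x).

Definition Hq : Type := (Cx * Cx)%type.
Definition Hzero : Hq := (Czero, Czero).
Definition Hadd (p q : Hq) : Hq := (Cadd (fst p) (fst q), Cadd (snd p) (snd q)).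
Definition Hopp (p : Hq) : Hq := (Copp (fst p), Copp (snd p)).
Definition Hmul (p q : Hq) : Hq :=
  (Cadd (Cmul (fst p) (fst q)) (Copp (Cmul (Cconj (snd q)) (snd p))),
   Cadd (Cmul (snd q) (fst p)) (Cmul (snd p) (Cconj (fst q)))).
Definition Hconj (p : Hq) : Hq := (Cconj (fst p), Copp (snd p)).

Definition Oc : Type := (Hq * Hq)%type.
Definition Ozero : Oc := (Hzero, Hzero).
Definition Oadd (p q : Oc) : Oc := (Hadd (fst p) (fst q), Hadd (snd p) (snd q)).
Definition Oopp (p : Oc) : Oc := (Hopp (fst p), Hopp (snd p)).
Definition Omul (p q : Oc) : Oc :=
  (Hadd (Hmul (fst p) (fst q)) (Hopp (Hmul (Hconj (snd q)) (snd p))),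
   Hadd (Hmul (snd q) (fst p)) (Hmul (snd p) (Hconj (fst q)))).
Definition Oconj (p : Oc) : Oc := (Hconj (fst p), Hopp (snd p)).

Definition RtoH (r : R) : Hq := ((r, 0), Czero).
Definition CtoO (c : Cx) : Oc := ((c, Czero), Hzero).
Definition HtoO (q : Hq) : Oc := (q, Hzero).
Definition RtoO (r : R) : Oc := HtoO (RtoH r).

Definition realip (x y : Oc) : R := fst (fst (fst (Omul (Oconj x) y))).
Definition onorm (x : Oc) : R := sqrt (realip x x).

Inductive case := RH | CO.

Definition Fty (k : case) : Type := match k with RH => R | CO => Cx end.
Definition Aty (k : case) : Type := match k with RH => Hq | CO => Oc end.

Definition fzero (k : case) : Fty k := match k with RH => 0 | CO => Czero end.

Definition incF (k : case) : Fty k -> Oc :=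
  match k with RH => RtoO | CO => CtoO end.
Definition emb (k : case) : Aty k -> Oc :=
  match k with RH => HtoO | CO => fun o => o end.

Definition aadd (k : case) : Aty k -> Aty k -> Aty k :=
  match k with RH => Hadd | CO => Oadd end.
Definition amul (k : case) : Aty k -> Aty k -> Aty k :=
  match k with RH => Hmul | CO => Omul end.
Definition ascale (k : case) : Aty k -> Fty k -> Aty k :=
  match k with
  | RH => fun x t => Hmul x (RtoH t)
  | CO => fun x t => Omul x (CtoO t)
  end.
Definition oscale (k : case) (u : Oc) (t : Fty k) : Oc := Omul u (incF k t).

(* the form (x|y) on O: real part of conj x * y for F = R,
   C-component of conj x * y for F = C *)
Definition ip (k : case) : Oc -> Oc -> Fty k :=
  match k with
  | RH => realip
  | CO => fun x y => fst (fst (Omul (Oconj x) y))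
  end.
Definition ipA (k : case) (x y : Aty k) : Fty k := ip k (emb k x) (emb k y).

(* Pu_F(O) and Pu_F(A): real-orthogonal complement of F *)
Definition PuO (k : case) (u : Oc) : Prop :=
  forall t : Fty k, realip (incF k t) u = 0.
Definition PuA (k : case) (x : Aty k) : Prop := PuO k (emb k x).

Definition sharp (k : case) (phi : Aty k -> Oc) : Prop :=
  (forall x y, phi (aadd k x y) = Oadd (phi x) (phi y)) /\
  (forall x t, phi (ascale k x t) = oscale k (phi x) t) /\
  (forall x y, phi (amul k x y) = Omul (phi x) (phi y)) /\
  (forall x y, ip k (phi x) (phi y) = ipA k x y).

(* a point [p]: p a nonzero element of Pu_F(A); [p] = p F *)
Definition is_point (k : case) (p : Aty k) : Prop :=
  PuA k p /\ emb k p <> Ozero.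
Definition pt_set (k : case) (p : Aty k) : Aty k -> Prop :=
  fun a => exists t : Fty k, a = ascale k p t.

Definition is_line (k : case) (x : Aty k) (u : Oc) : Prop :=
  PuA k x /\ PuO k u /\ onorm (emb k x) = onorm u /\ onorm u <> 0.
Definition line_set (k : case) (x : Aty k) (u : Oc) : Aty k -> Oc -> Prop :=
  fun a b => exists t : Fty k, t <> fzero k /\ a = ascale k x t /\ b = oscale k u t.

Definition pt_line_inc (k : case) (p : Aty k) (x : Aty k) (u : Oc) : Prop :=
  ipA k x p = fzero k.
Definition line_plane_inc (k : case) (x : Aty k) (u : Oc) (phi : Aty k -> Oc) : Prop :=
  phi x = u.

From Stdlib Require Import Reals Lra Ring Ring_theory FunctionalExtensionality PropExtensionality.

(* Write an octonion [a] as [(re a, vec a)], with [re a] in F and [vec a] the coordinates of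
   its part in Pu_F(O).  In these coordinates
     re (a b)  = re a re b - (vec a | vec b),
     vec (a b) = vec a re b + vec b conj (re a) + vec a × vec b,
   for a Hermitian form (.|.) and a cross product × with the identities of the octonionic
   cross product, and Pu_F(A) corresponds to a three-dimensional subspace.  Over R this is
   R^7 containing R^3 = Pu(H); over C it is C^3 = Pu_C(O).

   The theorem follows:
   - a sharp morphism fixes 1 and 1, x, y, x y span A, so it is determined by φ x and φ y;
   - if (x|y) = (u|v) and the lines are distinct, then x, y are independent (dependent ones
     give the same line) and (re, vec) ↦ (re, L vec), with L the extension of x ↦ u, y ↦ v,
     is a sharp morphism;
   - two lines through two distinct points p, q have first coordinates in the orthogonal
     complement of p, q in Pu_F(A), which is a line, so they are orthogonal to the same points. *)

Record V (K : Type) := mkV { v1 : K; v2 : K; v3 : K; v4 : K; v5 : K; v6 : K; v7 : K }.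
Arguments mkV {K}.
Arguments v1 {K}. Arguments v2 {K}. Arguments v3 {K}. Arguments v4 {K}.
Arguments v5 {K}. Arguments v6 {K}. Arguments v7 {K}.

Definition vadd {K} (add : K -> K -> K) (a b : V K) : V K :=
  mkV (add (v1 a) (v1 b)) (add (v2 a) (v2 b)) (add (v3 a) (v3 b)) (add (v4 a) (v4 b))
      (add (v5 a) (v5 b)) (add (v6 a) (v6 b)) (add (v7 a) (v7 b)).
Definition vscale {K} (mul : K -> K -> K) (a : V K) (t : K) : V K :=
  mkV (mul (v1 a) t) (mul (v2 a) t) (mul (v3 a) t) (mul (v4 a) t)
      (mul (v5 a) t) (mul (v6 a) t) (mul (v7 a) t).
Definition vzero {K} (z : K) : V K := mkV z z z z z z z.
Definition vcomb {K} (add mul : K -> K -> K) (t1 t2 t3 : K) (e1 e2 e3 : V K) : V K :=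
  vadd add (vscale mul e1 t1) (vadd add (vscale mul e2 t2) (vscale mul e3 t3)).

Lemma V_ext {K} (a b : V K) : v1 a = v1 b -> v2 a = v2 b -> v3 a = v3 b -> v4 a = v4 b ->
  v5 a = v5 b -> v6 a = v6 b -> v7 a = v7 b -> a = b.
Proof. destruct a, b; cbn; intros; subst; reflexivity. Qed.

(** A cross-product space: a field [K] with an involution, a Hermitian form [form] and a
    cross product [cross] (additive in each argument, conjugate-homogeneous) on [V K],
    satisfying the identities of the octonionic cross product on a subspace [Pv], together
    with a subspace [Qv] of [Pv] that is three-dimensional: every vector of [Qv] is given in a
    basis [p, q, p × q] by Cramer's rule ([cramer]).  In the application [Pv] is Pu_F(O) and
    [Qv] is Pu_F(A). *)
Record CrossSpace (K : Type) := {
  kzero : K; kone : K; kadd : K -> K -> K; kmul : K -> K -> K; kopp : K -> K;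
  kconj : K -> K; kinv : K -> K;
  form : V K -> V K -> K;
  cross : V K -> V K -> V K;
  Pv : V K -> Prop;
  Qv : V K -> Prop;
  k_ring : ring_theory kzero kone kadd kmul (fun a b => kadd a (kopp b)) kopp eq;
  kinv_r : forall a, a <> kzero -> kmul a (kinv a) = kone;
  conj_add : forall a b, kconj (kadd a b) = kadd (kconj a) (kconj b);
  conj_invol : forall a, kconj (kconj a) = a;
  conj_one : kconj kone = kone;
  form_addl : forall a b c, form (vadd kadd a b) c = kadd (form a c) (form b c);
  form_addr : forall a b c, form a (vadd kadd b c) = kadd (form a b) (form a c);
  form_scalel : forall a b t, form (vscale kmul a t) b = kmul (kconj t) (form a b);
  form_scaler : forall a b t, form a (vscale kmul b t) = kmul (form a b) t;
  form_sym : forall a b, form b a = kconj (form a b);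
  form_pos : forall a, Pv a -> form a a = kzero -> a = vzero kzero;
  cross_addl : forall a b c, cross (vadd kadd a b) c = vadd kadd (cross a c) (cross b c);
  cross_addr : forall a b c, cross a (vadd kadd b c) = vadd kadd (cross a b) (cross a c);
  cross_scalel : forall a b t, cross (vscale kmul a t) b = vscale kmul (cross a b) (kconj t);
  cross_scaler : forall a b t, cross a (vscale kmul b t) = vscale kmul (cross a b) (kconj t);
  Pv_add : forall a b, Pv a -> Pv b -> Pv (vadd kadd a b);
  Pv_scale : forall a t, Pv a -> Pv (vscale kmul a t);
  Pv_cross : forall a b, Pv a -> Pv b -> Pv (cross a b);
  Qv_Pv : forall a, Qv a -> Pv a;
  cross_self : forall a, Pv a -> cross a a = vzero kzero;
  cross_anti : forall a b, Pv a -> Pv b -> cross b a = vscale kmul (cross a b) (kopp kone);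
  cross_cross : forall a b, Pv a -> Pv b ->
    cross a (cross a b) = vadd kadd (vscale kmul a (form a b)) (vscale kmul b (kopp (form a a)));
  form_cross_l : forall a b, Pv a -> Pv b -> form a (cross a b) = kzero;
  form_cross_r : forall a b, Pv a -> Pv b -> form b (cross a b) = kzero;
  form_cross_cross : forall a b, Pv a -> Pv b ->
    form (cross a b) (cross a b) =
    kadd (kmul (form a a) (form b b)) (kopp (kmul (form a b) (form b a)));
  cramer : forall a p q, Qv a -> Qv p -> Qv q ->
    vscale kmul a (kadd (kmul (form p p) (form q q)) (kopp (kmul (form p q) (form q p)))) =
    vcomb kadd kmul (kadd (kmul (form q q) (form p a)) (kopp (kmul (form p q) (form q a))))
      (kadd (kmul (form p p) (form q a)) (kopp (kmul (form q p) (form p a))))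
      (form (cross p q) a) p q (cross p q)
}.
Arguments kzero {K}. Arguments kone {K}. Arguments kadd {K}. Arguments kmul {K}.
Arguments kopp {K}. Arguments kconj {K}. Arguments kinv {K}. Arguments form {K}.
Arguments cross {K}. Arguments Pv {K}. Arguments Qv {K}.

Section CrossSpaceTheory.
Variables (K : Type) (S : CrossSpace K).
Add Ring K_ring : (k_ring K S).

Local Notation "a + b" := (kadd S a b).
Local Notation "a * b" := (kmul S a b).
Local Notation "- a" := (kopp S a).
Local Notation "a - b" := (kadd S a (kopp S b)).
Local Notation "0" := (kzero S).
Local Notation "1" := (kone S).
Local Notation conj := (kconj S).
Local Notation "⟪ a , b ⟫" := (form S a b).
Local Notation "a × b" := (cross S a b) (at level 40).
Local Notation vplus := (vadd (kadd S)).
Local Notation vsc := (vscale (kmul S)).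
Local Notation v0 := (vzero (kzero S)).
Local Notation comb := (vcomb (kadd S) (kmul S)).

Ltac vring := apply V_ext; cbn [vadd vscale vzero vcomb v1 v2 v3 v4 v5 v6 v7]; ring.

Lemma conj_zero : conj 0 = 0.
Proof.
  assert (H : conj 0 = conj 0 + conj 0) by (rewrite <- conj_add; f_equal; ring).
  transitivity (conj 0 + conj 0 - conj 0); [ring | rewrite <- H; ring].
Qed.

Lemma conj_opp a : conj (- a) = - conj a.
Proof.
  assert (H : conj (- a) + conj a = 0).
  { rewrite <- conj_add. replace (- a + a) with 0 by ring. apply conj_zero. }
  transitivity (conj (- a) + conj a - conj a); [ring | rewrite H; ring].
Qed.

Lemma conj_nonzero a : a <> 0 -> conj a <> 0.
Proof. intros H C. apply H. rewrite <- (conj_invol _ S a), C. apply conj_zero. Qed.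

Lemma mul_integral a b : a * b = 0 -> a <> 0 -> b = 0.
Proof.
  intros H Ha. transitivity (kinv S a * (a * b)).
  - transitivity ((a * kinv S a) * b); [rewrite kinv_r by exact Ha; ring | ring].
  - rewrite H; ring.
Qed.

Lemma vsc_vsc a s t : vsc (vsc a s) t = vsc a (s * t).
Proof. vring. Qed.

Lemma vsc_one a : vsc a 1 = a.
Proof. vring. Qed.

Lemma vsc_div a b s t : vsc a s = vsc b t -> s <> 0 -> a = vsc b (t * kinv S s).
Proof.
  intros H Hs. rewrite <- (vsc_one a), <- (kinv_r _ S s Hs), <- vsc_vsc, H, vsc_vsc.
  reflexivity.
Qed.

Lemma vsc_zero_inv a s : vsc a s = v0 -> s <> 0 -> a = v0.
Proof. intros H Hs. rewrite (vsc_div a v0 s 0 ltac:(rewrite H; vring) Hs). vring. Qed.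

Lemma form_zero_l b : ⟪v0, b⟫ = 0.
Proof. replace v0 with (vsc v0 0) by vring. rewrite form_scalel, conj_zero. ring. Qed.

Lemma form_self_conj a : conj ⟪a, a⟫ = ⟪a, a⟫.
Proof. rewrite <- form_sym. reflexivity. Qed.

Lemma form_conj a b : conj ⟪a, b⟫ = ⟪b, a⟫.
Proof. rewrite <- form_sym. reflexivity. Qed.

(** The Gram determinant of [p, q]; it vanishes iff [p] and [q] are dependent. *)
Definition gram (p q : V K) : K := ⟪p, p⟫ * ⟪q, q⟫ - ⟪p, q⟫ * ⟪q, p⟫.

Lemma gram_eq f g p q :
  ⟪f, f⟫ = ⟪p, p⟫ -> ⟪g, g⟫ = ⟪q, q⟫ -> ⟪f, g⟫ = ⟪p, q⟫ -> gram f g = gram p q.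
Proof.
  intros Hf Hg Hfg. unfold gram. rewrite (form_sym _ S f g), (form_sym _ S p q), Hf, Hg, Hfg.
  reflexivity.
Qed.

Lemma gram_zero_proportional p q : Pv S p -> Pv S q -> gram p q = 0 ->
  vsc q ⟪p, p⟫ = vsc p ⟪p, q⟫.
Proof.
  intros Pp Pq HD.
  set (w := vplus (vsc q ⟪p, p⟫) (vsc p (- ⟪p, q⟫))).
  assert (Pw : Pv S w) by (apply Pv_add; apply Pv_scale; assumption).
  assert (Hww : ⟪w, w⟫ = ⟪p, p⟫ * gram p q).
  { unfold w. rewrite ?form_addl, ?form_addr, ?form_scalel, ?form_scaler.
    rewrite conj_opp, !form_self_conj, !form_conj, (form_sym _ S p q), form_conj.
    unfold gram. ring. }
  rewrite HD in Hww.
  assert (Hw : w = v0) by (apply form_pos; [exact Pw | rewrite Hww; ring]).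
  transitivity (vplus w (vsc p ⟪p, q⟫)); [unfold w; vring | rewrite Hw; vring].
Qed.

Lemma gram_zero_multiple a b : ⟪a, a⟫ <> 0 -> Pv S a -> Pv S b -> gram a b = 0 ->
  b = vsc a (⟪a, b⟫ * kinv S ⟪a, a⟫).
Proof.
  intros Ha Pa Pb HD. apply (vsc_div b a ⟪a, a⟫ ⟪a, b⟫); [| exact Ha].
  apply gram_zero_proportional; assumption.
Qed.

Lemma form_self_nonzero a : a <> v0 -> Pv S a -> ⟪a, a⟫ <> 0.
Proof. intros Ha Pa Z. apply Ha, form_pos; assumption. Qed.

Lemma form_comb t1 t2 t3 s1 s2 s3 e1 e2 e3 :
  ⟪e1, e3⟫ = 0 -> ⟪e2, e3⟫ = 0 ->
  ⟪comb t1 t2 t3 e1 e2 e3, comb s1 s2 s3 e1 e2 e3⟫ =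
  conj t1 * s1 * ⟪e1, e1⟫ + conj t1 * s2 * ⟪e1, e2⟫ +
  conj t2 * s1 * conj ⟪e1, e2⟫ + conj t2 * s2 * ⟪e2, e2⟫ + conj t3 * s3 * ⟪e3, e3⟫.
Proof.
  intros H13 H23. unfold vcomb.
  rewrite ?form_addl, ?form_addr, ?form_scalel, ?form_scaler.
  rewrite (form_sym _ S e1 e2), (form_sym _ S e1 e3), (form_sym _ S e2 e3), H13, H23, conj_zero.
  ring.
Qed.

(** Cramer's rule in [Qv]: the coordinates of [a] in the basis [p, q, p × q], times [gram p q]. *)
Definition coord1 (p q a : V K) : K := ⟪q, q⟫ * ⟪p, a⟫ - ⟪p, q⟫ * ⟪q, a⟫.
Definition coord2 (p q a : V K) : K := ⟪p, p⟫ * ⟪q, a⟫ - ⟪q, p⟫ * ⟪p, a⟫.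
Definition coord3 (p q a : V K) : K := ⟪p × q, a⟫.

Lemma cramer_rule a p q : Qv S a -> Qv S p -> Qv S q ->
  vsc a (gram p q) = comb (coord1 p q a) (coord2 p q a) (coord3 p q a) p q (p × q).
Proof. apply cramer. Qed.

Section Basis.
Variables p q : V K.
Hypotheses (Qp : Qv S p) (Qq : Qv S q) (Hgram : gram p q <> 0).

Lemma cramer_inverse a : Qv S a ->
  a = vsc (comb (coord1 p q a) (coord2 p q a) (coord3 p q a) p q (p × q)) (kinv S (gram p q)).
Proof.
  intro Qa. rewrite <- cramer_rule, vsc_vsc, kinv_r, vsc_one by assumption. reflexivity.
Qed.

Lemma orthogonal_multiple x : Qv S x -> ⟪x, p⟫ = 0 -> ⟪x, q⟫ = 0 ->
  vsc x (gram p q) = vsc (p × q) (coord3 p q x).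
Proof.
  intros Qx Hp Hq. rewrite (cramer_rule x p q Qx Qp Qq).
  assert (E1 : coord1 p q x = 0).
  { unfold coord1. rewrite (form_sym _ S x p), (form_sym _ S x q), Hp, Hq, conj_zero. ring. }
  assert (E2 : coord2 p q x = 0).
  { unfold coord2. rewrite (form_sym _ S x p), (form_sym _ S x q), Hp, Hq, conj_zero. ring. }
  rewrite E1, E2. vring.
Qed.

Lemma orthogonal_zero_iff x r : Qv S x -> x <> v0 -> ⟪x, p⟫ = 0 -> ⟪x, q⟫ = 0 ->
  (⟪x, r⟫ = 0 <-> ⟪p × q, r⟫ = 0).
Proof.
  intros Qx Hx Hp Hq.
  pose proof (orthogonal_multiple x Qx Hp Hq) as E.
  assert (Hc : coord3 p q x <> 0).
  { intro C. apply Hx. apply (vsc_zero_inv x (gram p q)); [rewrite E, C; vring | exact Hgram]. }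
  assert (Er : conj (gram p q) * ⟪x, r⟫ = conj (coord3 p q x) * ⟪p × q, r⟫)
    by (rewrite <- !form_scalel, E; reflexivity).
  split; intro Z; rewrite Z in Er.
  - apply (mul_integral (conj (coord3 p q x))); [rewrite <- Er; ring | apply conj_nonzero, Hc].
  - apply (mul_integral (conj (gram p q))); [rewrite Er; ring | apply conj_nonzero, Hgram].
Qed.

Lemma orthogonal_same_perp x y r : Qv S x -> Qv S y -> x <> v0 -> y <> v0 ->
  ⟪x, p⟫ = 0 -> ⟪x, q⟫ = 0 -> ⟪y, p⟫ = 0 -> ⟪y, q⟫ = 0 ->
  (⟪x, r⟫ = 0 <-> ⟪y, r⟫ = 0).
Proof.
  intros Qx Qy Hx Hy Hxp Hxq Hyp Hyq.
  rewrite (orthogonal_zero_iff x r Qx Hx Hxp Hxq), (orthogonal_zero_iff y r Qy Hy Hyp Hyq).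
  reflexivity.
Qed.
End Basis.

Lemma cross_comb p q s1 s2 s3 t1 t2 t3 : Pv S p -> Pv S q ->
  comb s1 s2 s3 p q (p × q) × comb t1 t2 t3 p q (p × q) =
  comb (⟪p, q⟫ * (conj s1 * conj t3 - conj s3 * conj t1)
          + ⟪q, q⟫ * (conj s2 * conj t3 - conj s3 * conj t2))
       (- (⟪p, p⟫ * (conj s1 * conj t3 - conj s3 * conj t1))
          - ⟪q, p⟫ * (conj s2 * conj t3 - conj s3 * conj t2))
       (conj s1 * conj t2 - conj s2 * conj t1) p q (p × q).
Proof.
  intros Pp Pq. set (w := p × q).
  assert (Pw : Pv S w) by (apply Pv_cross; assumption).
  assert (Tqp : q × p = vsc w (- kone S)) by (apply cross_anti; assumption).
  assert (Tpw : p × w = vplus (vsc p ⟪p, q⟫) (vsc q (- ⟪p, p⟫)))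
    by (apply cross_cross; assumption).
  assert (Tqw : q × w = vplus (vsc p ⟪q, q⟫) (vsc q (- ⟪q, p⟫))).
  { unfold w. rewrite (cross_anti _ S q p Pq Pp), cross_scaler, cross_cross by assumption.
    rewrite conj_opp, conj_one. vring. }
  assert (Twp : w × p = vsc (p × w) (- kone S)) by (apply cross_anti; assumption).
  assert (Twq : w × q = vsc (q × w) (- kone S)) by (apply cross_anti; assumption).
  rewrite Tpw in Twp. rewrite Tqw in Twq.
  unfold vcomb. rewrite ?cross_addl, ?cross_addr, ?cross_scalel, ?cross_scaler.
  rewrite (cross_self _ S p Pp), (cross_self _ S q Pq), (cross_self _ S w Pw).
  fold w. rewrite Tqp, Tpw, Tqw, Twp, Twq. vring.
Qed.

(** ** Extension of a Gram-preserving assignment to an isometry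
    Given independent [p, q] in [Qv] and [f, g] in [Pv] with the same Gram matrix, the map [L]
    sending [p, q, p × q] to [f, g, f × g] preserves the form and the cross product on [Qv]. *)
Section Extension.
Variables p q f g : V K.
Hypotheses (Qp : Qv S p) (Qq : Qv S q) (Pf : Pv S f) (Pg : Pv S g).
Hypotheses (Gff : ⟪f, f⟫ = ⟪p, p⟫) (Ggg : ⟪g, g⟫ = ⟪q, q⟫) (Gfg : ⟪f, g⟫ = ⟪p, q⟫).
Hypothesis Hgram : gram p q <> 0.

Let Pp : Pv S p := Qv_Pv _ S p Qp.
Let Pq : Pv S q := Qv_Pv _ S q Qq.

Definition extension (a : V K) : V K :=
  vsc (comb (coord1 p q a) (coord2 p q a) (coord3 p q a) f g (f × g)) (kinv S (gram p q)).

Lemma extension_add a b : extension (vplus a b) = vplus (extension a) (extension b).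
Proof. unfold extension, coord1, coord2, coord3. rewrite !form_addr. vring. Qed.

Lemma extension_scale a t : extension (vsc a t) = vsc (extension a) t.
Proof. unfold extension, coord1, coord2, coord3. rewrite !form_scaler. vring. Qed.

Lemma extension_Pv a : Pv S (extension a).
Proof.
  unfold extension, vcomb.
  repeat first [apply Pv_add | apply Pv_scale | apply Pv_cross | assumption].
Qed.

Lemma extension_basis t1 t2 t3 :
  extension (comb t1 t2 t3 p q (p × q)) = comb t1 t2 t3 f g (f × g).
Proof.
  pose proof (kinv_r _ S _ Hgram) as Hinv.
  assert (HD : ⟪p, p⟫ * ⟪q, q⟫ = gram p q + ⟪p, q⟫ * ⟪q, p⟫) by (unfold gram; ring).
  unfold extension, coord1, coord2, coord3, vcomb.
  rewrite ?form_addr, ?form_scaler.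
  rewrite (form_sym _ S p (p × q)), (form_sym _ S q (p × q)), (form_cross_l _ S p q Pp Pq),
    (form_cross_r _ S p q Pp Pq), (form_cross_cross _ S p q Pp Pq), conj_zero.
  revert Hinv HD. generalize (gram p q) (kinv S (gram p q)). intros D Dinv Hinv HD.
  apply V_ext; cbn [vadd vscale vzero v1 v2 v3 v4 v5 v6 v7]; ring [HD Hinv].
Qed.

Lemma extension_p : extension p = f.
Proof.
  transitivity (extension (comb 1 0 0 p q (p × q))); [f_equal; vring |].
  rewrite extension_basis. vring.
Qed.

Lemma extension_q : extension q = g.
Proof.
  transitivity (extension (comb 0 1 0 p q (p × q))); [f_equal; vring |].
  rewrite extension_basis. vring.
Qed.

Lemma extension_form a b : Qv S a -> Qv S b -> ⟪extension a, extension b⟫ = ⟪a, b⟫.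
Proof.
  intros Qa Qb.
  assert (Gw : ⟪f × g, f × g⟫ = gram p q).
  { rewrite form_cross_cross by assumption. exact (gram_eq f g p q Gff Ggg Gfg). }
  rewrite (cramer_inverse p q Qp Qq Hgram a Qa) at 2.
  rewrite (cramer_inverse p q Qp Qq Hgram b Qb) at 2.
  unfold extension. rewrite !form_scalel, !form_scaler, !form_comb;
    try apply form_cross_l; try apply form_cross_r; try assumption.
  rewrite Gff, Ggg, Gfg, Gw, form_cross_cross by assumption. reflexivity.
Qed.

Lemma extension_cross a b : Qv S a -> Qv S b ->
  extension (a × b) = extension a × extension b.
Proof.
  intros Qa Qb.
  rewrite (cramer_inverse p q Qp Qq Hgram a Qa) at 1.
  rewrite (cramer_inverse p q Qp Qq Hgram b Qb) at 1.
  unfold extension at 2 3.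
  rewrite !cross_scalel, !cross_scaler, !extension_scale, !cross_comb, extension_basis
    by assumption.
  rewrite Gff, Ggg, Gfg, <- (form_conj f g), Gfg, form_conj. reflexivity.
Qed.
End Extension.
End CrossSpaceTheory.

Ltac destruct_coords := repeat match goal with
  | a : V _ |- _ => destruct a
  | z : Oc |- _ => destruct z
  | z : Hq |- _ => destruct z
  | z : Cx |- _ => destruct z
  | z : (_ * _)%type |- _ => destruct z
  end.

Ltac split_pairs := repeat match goal with |- (_, _) = (_, _) => f_equal end.

Ltac unfold_octonions := cbv beta iota zeta delta [Omul Oadd Oconj Oopp Ozero RtoO HtoO RtoH
  Hmul Hadd Hconj Hopp Hzero Cmul Cadd Cconj Copp Czero realip fst snd] in *.

Lemma realip_mul a b : realip (Omul a b) (Omul a b) = realip a a * realip b b.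
Proof. destruct_coords. unfold_octonions. ring. Qed.

Lemma realip_nonneg a : 0 <= realip a a.
Proof. destruct_coords. unfold_octonions. nra. Qed.

Lemma realip_definite a : realip a a = 0 -> a = Ozero.
Proof.
  destruct_coords. unfold_octonions. intro H.
  split_pairs; nra.
Qed.

(** An idempotent octonion of norm one is the unit: [e (e - 1) = 0] and the norm is
    multiplicative, so [|e - 1| = 0]. *)
Lemma idempotent_unit e : Omul e e = e -> realip e e = 1 -> e = RtoO 1.
Proof.
  intros Hidem Hnorm.
  set (d := Oadd e (RtoO (-1))).
  assert (Hzero : Omul e d = Ozero).
  { transitivity (Oadd (Omul e e) (Omul e (RtoO (-1)))).
    - unfold d. destruct_coords. unfold_octonions. split_pairs; ring.
    - rewrite Hidem. destruct_coords. unfold_octonions. split_pairs; ring. }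
  assert (Hd : d = Ozero).
  { apply realip_definite. pose proof (realip_mul e d) as Hm.
    rewrite Hzero, Hnorm, Rmult_1_l in Hm. rewrite <- Hm. unfold realip. cbn. ring. }
  unfold d in Hd. destruct_coords. unfold_octonions. injection Hd; intros.
  split_pairs; lra.
Qed.

(** * The real cross-product space: Pu(O) = R^7 containing Pu(H) = R^3 *)

Definition dot7 (a b : V R) : R :=
  v1 a * v1 b + v2 a * v2 b + v3 a * v3 b + v4 a * v4 b + v5 a * v5 b + v6 a * v6 b
  + v7 a * v7 b.

(* the octonionic cross product, in the coordinates [vecR] below *)
Definition cross7 (a b : V R) : V R :=
  let (a1, a2, a3, a4, a5, a6, a7) := a in
  let (b1, b2, b3, b4, b5, b6, b7) := b in
  mkV (a2*b3 - a3*b2 + a4*b5 - a5*b4 - a6*b7 + a7*b6)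
      (- a1*b3 + a3*b1 + a4*b6 + a5*b7 - a6*b4 - a7*b5)
      (a1*b2 - a2*b1 + a4*b7 - a5*b6 + a6*b5 - a7*b4)
      (- a1*b5 - a2*b6 - a3*b7 + a5*b1 + a6*b2 + a7*b3)
      (a1*b4 - a2*b7 + a3*b6 - a4*b1 - a6*b3 + a7*b2)
      (a1*b7 + a2*b4 - a3*b5 - a4*b2 + a5*b3 - a7*b1)
      (- a1*b6 + a2*b5 + a3*b4 - a4*b3 - a5*b2 + a6*b1).

(* the coordinates of Pu(H) inside Pu(O) *)
Definition quatPart (a : V R) : Prop := v4 a = 0 /\ v5 a = 0 /\ v6 a = 0 /\ v7 a = 0.

Ltac real_vector_ring := intros; destruct_coords; unfold dot7, cross7, vadd, vscale, vzero, vcomb;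
  cbn; try apply V_ext; cbn; ring.

Definition realSpace : CrossSpace R := {|
  kzero := 0; kone := 1; kadd := Rplus; kmul := Rmult; kopp := Ropp;
  kconj := fun t => t; kinv := Rinv;
  form := dot7; cross := cross7; Pv := fun _ => True; Qv := quatPart;
  k_ring := RTheory;
  kinv_r := fun a Ha => Rinv_r a Ha;
  conj_add := fun _ _ => eq_refl;
  conj_invol := fun _ => eq_refl; conj_one := eq_refl;
  form_addl := ltac:(real_vector_ring); form_addr := ltac:(real_vector_ring);
  form_scalel := ltac:(real_vector_ring); form_scaler := ltac:(real_vector_ring);
  form_sym := ltac:(real_vector_ring);
  form_pos := ltac:(intros a _ H; destruct_coords; unfold dot7 in H; cbn in H;
                    apply V_ext; cbn; nra);
  cross_addl := ltac:(real_vector_ring); cross_addr := ltac:(real_vector_ring);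
  cross_scalel := ltac:(real_vector_ring); cross_scaler := ltac:(real_vector_ring);
  Pv_add := fun _ _ _ _ => I; Pv_scale := fun _ _ _ => I; Pv_cross := fun _ _ _ _ => I;
  Qv_Pv := fun _ _ => I;
  cross_self := ltac:(real_vector_ring); cross_anti := ltac:(real_vector_ring);
  cross_cross := ltac:(real_vector_ring);
  form_cross_l := ltac:(real_vector_ring); form_cross_r := ltac:(real_vector_ring);
  form_cross_cross := ltac:(real_vector_ring);
  cramer := ltac:(intros a p q (A4 & A5 & A6 & A7) (P4 & P5 & P6 & P7) (Q4 & Q5 & Q6 & Q7);
                  destruct_coords; cbn in *; subst; real_vector_ring)
|}.

Definition reR (o : Oc) : R := fst (fst (fst o)).
Definition vecR (o : Oc) : V R :=
  mkV (snd (fst (fst o))) (fst (snd (fst o))) (snd (snd (fst o)))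
      (fst (fst (snd o))) (snd (fst (snd o))) (fst (snd (snd o))) (snd (snd (snd o))).
Definition ofR (r : R) (w : V R) : Oc :=
  (((r, v1 w), (v2 w, v3 w)), ((v4 w, v5 w), (v6 w, v7 w))).

Ltac octonion_ring := intros; destruct_coords; unfold_octonions;
  unfold reR, vecR, ofR, dot7, cross7, vadd, vscale in *; cbn in *;
  try apply V_ext; cbn; split_pairs; ring.

Lemma reR_vecR_ext a b : reR a = reR b -> vecR a = vecR b -> a = b.
Proof.
  destruct_coords. unfold reR, vecR. cbn. intros H1 H2. injection H2; intros; subst.
  reflexivity.
Qed.

Lemma vecR_ofR r w : vecR (ofR r w) = w.
Proof. destruct w; reflexivity. Qed.

Lemma reR_add a b : reR (Oadd a b) = reR a + reR b.
Proof. octonion_ring. Qed.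
Lemma vecR_add a b : vecR (Oadd a b) = vadd Rplus (vecR a) (vecR b).
Proof. octonion_ring. Qed.
Lemma reR_mul a b : reR (Omul a b) = reR a * reR b + - dot7 (vecR a) (vecR b).
Proof. octonion_ring. Qed.
Lemma vecR_mul a b : vecR (Omul a b) =
  vadd Rplus (vadd Rplus (vscale Rmult (vecR a) (reR b)) (vscale Rmult (vecR b) (reR a)))
    (cross7 (vecR a) (vecR b)).
Proof. octonion_ring. Qed.
Lemma reR_scale a t : reR (Omul a (RtoO t)) = reR a * t.
Proof. octonion_ring. Qed.
Lemma vecR_scale a t : vecR (Omul a (RtoO t)) = vscale Rmult (vecR a) t.
Proof. octonion_ring. Qed.
Lemma realip_coords a b : realip a b = reR a * reR b + dot7 (vecR a) (vecR b).
Proof. octonion_ring. Qed.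

Lemma pure_reR u : PuO RH u -> reR u = 0.
Proof.
  intro H. specialize (H 1). rewrite <- H. cbn. octonion_ring.
Qed.

Lemma HtoO_add p q : HtoO (Hadd p q) = Oadd (HtoO p) (HtoO q).
Proof. octonion_ring. Qed.
Lemma HtoO_mul p q : HtoO (Hmul p q) = Omul (HtoO p) (HtoO q).
Proof. octonion_ring. Qed.
Lemma HtoO_inj p q : HtoO p = HtoO q -> p = q.
Proof. unfold HtoO. intro H. injection H. auto. Qed.
Lemma quatPart_HtoO p : quatPart (vecR (HtoO p)).
Proof. destruct_coords. unfold quatPart. cbn. auto. Qed.

(** * The complex cross-product space: Pu_C(O) = C^3 *)

Definition Cinv (z : Cx) : Cx :=
  (fst z / (fst z * fst z + snd z * snd z), - snd z / (fst z * fst z + snd z * snd z)).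

Ltac unfold_complex := unfold Czero, Cone, Cadd, Cmul, Copp, Cconj in *.

Lemma C_ring : ring_theory Czero Cone Cadd Cmul (fun a b => Cadd a (Copp b)) Copp eq.
Proof.
  constructor; intros; destruct_coords; unfold_complex; cbn; f_equal; ring.
Qed.

Lemma Cinv_r z : z <> Czero -> Cmul z (Cinv z) = Cone.
Proof.
  intro Hz. destruct z as [a b]. unfold Cinv, Cmul, Cone. cbn.
  assert (a * a + b * b <> 0).
  { intro H. apply Hz. assert (a = 0) by nra. assert (b = 0) by nra. subst. reflexivity. }
  f_equal; field; assumption.
Qed.

(* the Hermitian form and the conjugate-bilinear cross product of C^3, written on the first
   three coordinates of [V Cx]; [complex3] is the subspace where the other four vanish *)
Definition herm3 (a b : V Cx) : Cx :=
  Cadd (Cadd (Cmul (Cconj (v1 a)) (v1 b)) (Cmul (Cconj (v2 a)) (v2 b)))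
    (Cmul (Cconj (v3 a)) (v3 b)).
Definition cross3 (a b : V Cx) : V Cx :=
  mkV (Cconj (Cadd (Cmul (v2 a) (v3 b)) (Copp (Cmul (v3 a) (v2 b)))))
      (Cconj (Cadd (Cmul (v3 a) (v1 b)) (Copp (Cmul (v1 a) (v3 b)))))
      (Cconj (Cadd (Cmul (v1 a) (v2 b)) (Copp (Cmul (v2 a) (v1 b)))))
      Czero Czero Czero Czero.
Definition complex3 (a : V Cx) : Prop :=
  v4 a = Czero /\ v5 a = Czero /\ v6 a = Czero /\ v7 a = Czero.

Ltac complex_vector_ring := intros;
  repeat match goal with H : complex3 _ |- _ => destruct H as (? & ? & ? & ?) end;
  destruct_coords; unfold herm3, cross3, complex3, vadd, vscale, vzero, vcomb in *;
  cbn in *; unfold_complex; cbn in *;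
  repeat match goal with H : (_, _) = (_, _) |- _ => injection H; clear H; intros end;
  subst; try apply V_ext; cbn; split_pairs; ring.

Definition complexSpace : CrossSpace Cx := {|
  kzero := Czero; kone := Cone; kadd := Cadd; kmul := Cmul; kopp := Copp;
  kconj := Cconj; kinv := Cinv;
  form := herm3; cross := cross3; Pv := complex3; Qv := complex3;
  k_ring := C_ring;
  kinv_r := Cinv_r;
  conj_add := ltac:(complex_vector_ring);
  conj_invol := ltac:(complex_vector_ring); conj_one := ltac:(complex_vector_ring);
  form_addl := ltac:(complex_vector_ring); form_addr := ltac:(complex_vector_ring);
  form_scalel := ltac:(complex_vector_ring); form_scaler := ltac:(complex_vector_ring);
  form_sym := ltac:(complex_vector_ring);
  form_pos := ltac:(intros a (A4 & A5 & A6 & A7) H; destruct_coords; cbn in *; subst;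
                    unfold herm3 in H; unfold_complex; cbn in H; injection H; intros;
                    apply V_ext; cbn; unfold Czero; try assumption; f_equal; nra);
  cross_addl := ltac:(complex_vector_ring); cross_addr := ltac:(complex_vector_ring);
  cross_scalel := ltac:(complex_vector_ring); cross_scaler := ltac:(complex_vector_ring);
  Pv_add := ltac:(intros a b (A4 & A5 & A6 & A7) (B4 & B5 & B6 & B7); unfold complex3;
                  cbn; rewrite A4, A5, A6, A7, B4, B5, B6, B7; repeat split; unfold_complex;
                  cbn; f_equal; ring);
  Pv_scale := ltac:(intros a t (A4 & A5 & A6 & A7); unfold complex3; cbn;
                    rewrite A4, A5, A6, A7; repeat split; destruct t; unfold_complex;
                    cbn; f_equal; ring);
  Pv_cross := ltac:(intros; repeat split);
  Qv_Pv := fun _ H => H;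
  cross_self := ltac:(complex_vector_ring); cross_anti := ltac:(complex_vector_ring);
  cross_cross := ltac:(complex_vector_ring);
  form_cross_l := ltac:(complex_vector_ring); form_cross_r := ltac:(complex_vector_ring);
  form_cross_cross := ltac:(complex_vector_ring);
  cramer := ltac:(complex_vector_ring)
|}.

Definition reC (o : Oc) : Cx := fst (fst o).
Definition vecC (o : Oc) : V Cx :=
  mkV (Cconj (snd (fst o))) (Cconj (fst (snd o))) (snd (snd o)) Czero Czero Czero Czero.
Definition ofC (c : Cx) (w : V Cx) : Oc := ((c, Cconj (v1 w)), (Cconj (v2 w), v3 w)).

Ltac complex_octonion_ring := intros; destruct_coords; unfold ip in *; unfold_octonions;
  unfold reC, vecC, ofC, herm3, cross3, vadd, vscale, CtoO in *; unfold_complex; cbn in *;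
  try apply V_ext; cbn; split_pairs; ring.

Lemma reC_vecC_ext a b : reC a = reC b -> vecC a = vecC b -> a = b.
Proof.
  destruct_coords. unfold reC, vecC, Cconj. cbn. intros H1 H2.
  injection H1; injection H2; intros.
  split_pairs; lra.
Qed.

Lemma complex3_vecC a : complex3 (vecC a).
Proof. unfold complex3. cbn. auto. Qed.

Lemma vecC_ofC c w : complex3 w -> vecC (ofC c w) = w.
Proof.
  intros (W4 & W5 & W6 & W7). destruct w. cbn in *. subst. unfold vecC, ofC. cbn.
  destruct_coords. unfold Cconj. cbn. rewrite !Ropp_involutive. reflexivity.
Qed.

Lemma reC_add a b : reC (Oadd a b) = Cadd (reC a) (reC b).
Proof. complex_octonion_ring. Qed.
Lemma vecC_add a b : vecC (Oadd a b) = vadd Cadd (vecC a) (vecC b).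
Proof. complex_octonion_ring. Qed.
Lemma reC_mul a b : reC (Omul a b) = Cadd (Cmul (reC a) (reC b)) (Copp (herm3 (vecC a) (vecC b))).
Proof. complex_octonion_ring. Qed.
Lemma vecC_mul a b : vecC (Omul a b) =
  vadd Cadd (vadd Cadd (vscale Cmul (vecC a) (reC b)) (vscale Cmul (vecC b) (Cconj (reC a))))
    (cross3 (vecC a) (vecC b)).
Proof. complex_octonion_ring. Qed.
Lemma reC_scale a t : reC (Omul a (CtoO t)) = Cmul (reC a) t.
Proof. complex_octonion_ring. Qed.
Lemma vecC_scale a t : vecC (Omul a (CtoO t)) = vscale Cmul (vecC a) t.
Proof. complex_octonion_ring. Qed.
Lemma ipCO_coords a b : ip CO a b = Cadd (Cmul (Cconj (reC a)) (reC b)) (herm3 (vecC a) (vecC b)).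
Proof. complex_octonion_ring. Qed.
Lemma ipCO_self a : ip CO a a = (realip a a, 0).
Proof. complex_octonion_ring. Qed.

Lemma pure_reC u : PuO CO u -> reC u = Czero.
Proof.
  intro H. pose proof (H Cone) as H1. pose proof (H (0, 1)) as H2. cbn in H1, H2.
  destruct_coords. unfold_octonions. unfold reC, Czero. cbn in *.
  f_equal; lra.
Qed.

(** * Coordinates, uniformly in the case (F, A)
    Each formula below is the real or the complex one, according to the case. *)

Definition space (k : case) : CrossSpace (Fty k) :=
  match k return CrossSpace (Fty k) with RH => realSpace | CO => complexSpace end.
Definition re (k : case) : Oc -> Fty k :=
  match k return Oc -> Fty k with RH => reR | CO => reC end.
Definition vec (k : case) : Oc -> V (Fty k) :=
  match k return Oc -> V (Fty k) with RH => vecR | CO => vecC end.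
Definition ofCoords (k : case) : Fty k -> V (Fty k) -> Oc :=
  match k return Fty k -> V (Fty k) -> Oc with RH => ofR | CO => ofC end.
Definition ofReal (k : case) : R -> Fty k :=
  match k return R -> Fty k with RH => fun r => r | CO => fun r => (r, 0) end.
Definition unitA (k : case) : Aty k :=
  match k return Aty k with RH => RtoH 1 | CO => RtoO 1 end.

Section Uniform.
Variable k : case.

Local Notation S := (space k).
Local Notation "a + b" := (kadd S a b).
Local Notation "a * b" := (kmul S a b).
Local Notation "- a" := (kopp S a).
Local Notation vplus := (vadd (kadd S)).
Local Notation vsc := (vscale (kmul S)).

Lemma zero_space : kzero S = fzero k.
Proof. destruct k; reflexivity. Qed.

Lemma coords_ext a b : re k a = re k b -> vec k a = vec k b -> a = b.
Proof. destruct k; [apply reR_vecR_ext | apply reC_vecC_ext]. Qed.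

Lemma vec_Pv a : Pv S (vec k a).
Proof. destruct k; [exact I | apply complex3_vecC]. Qed.

Lemma re_ofCoords r w : re k (ofCoords k r w) = r.
Proof. destruct k; reflexivity. Qed.
Lemma vec_ofCoords r w : Pv S w -> vec k (ofCoords k r w) = w.
Proof. destruct k; [intros _; apply vecR_ofR | apply vecC_ofC]. Qed.

Lemma re_add a b : re k (Oadd a b) = re k a + re k b.
Proof. destruct k; [apply reR_add | apply reC_add]. Qed.
Lemma vec_add a b : vec k (Oadd a b) = vplus (vec k a) (vec k b).
Proof. destruct k; [apply vecR_add | apply vecC_add]. Qed.
Lemma re_mul a b : re k (Omul a b) = re k a * re k b + - form S (vec k a) (vec k b).
Proof. destruct k; [apply reR_mul | apply reC_mul]. Qed.
Lemma vec_mul a b : vec k (Omul a b) =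
  vplus (vplus (vsc (vec k a) (re k b)) (vsc (vec k b) (kconj S (re k a))))
    (cross S (vec k a) (vec k b)).
Proof. destruct k; [apply vecR_mul | apply vecC_mul]. Qed.
Lemma re_scale a t : re k (oscale k a t) = re k a * t.
Proof. destruct k; [apply reR_scale | apply reC_scale]. Qed.
Lemma vec_scale a t : vec k (oscale k a t) = vsc (vec k a) t.
Proof. destruct k; [apply vecR_scale | apply vecC_scale]. Qed.
Lemma re_one : re k (RtoO 1) = kone S.
Proof. destruct k; reflexivity. Qed.
Lemma vec_one : vec k (RtoO 1) = vzero (kzero S).
Proof.
  destruct k; [reflexivity |].
  apply V_ext; cbn; unfold Cconj, Czero; cbn; try reflexivity; f_equal; ring.
Qed.

Lemma re_zero : re k Ozero = kzero S.
Proof. destruct k; reflexivity. Qed.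
Lemma vec_zero : vec k Ozero = vzero (kzero S).
Proof.
  destruct k; [reflexivity |].
  apply V_ext; cbn; unfold Cconj, Czero; cbn; try reflexivity; f_equal; ring.
Qed.

Lemma ip_coords a b :
  ip k a b = kconj S (re k a) * re k b + form S (vec k a) (vec k b).
Proof. destruct k; [apply realip_coords | apply ipCO_coords]. Qed.

Lemma ip_self a : ip k a a = ofReal k (realip a a).
Proof. destruct k; [reflexivity | apply ipCO_self]. Qed.
Lemma ofReal_inj r s : ofReal k r = ofReal k s -> r = s.
Proof. destruct k; cbn; [auto | intro H; injection H; auto]. Qed.
Lemma ofReal_zero : ofReal k 0 = kzero S.
Proof. destruct k; reflexivity. Qed.

Lemma pure_re u : PuO k u -> re k u = kzero S.
Proof. destruct k; [apply pure_reR | apply pure_reC]. Qed.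

Lemma emb_add x y : emb k (aadd k x y) = Oadd (emb k x) (emb k y).
Proof. destruct k; [apply HtoO_add | reflexivity]. Qed.
Lemma emb_mul x y : emb k (amul k x y) = Omul (emb k x) (emb k y).
Proof. destruct k; [apply HtoO_mul | reflexivity]. Qed.
Lemma emb_scale x t : emb k (ascale k x t) = oscale k (emb k x) t.
Proof. destruct k; [apply HtoO_mul | reflexivity]. Qed.
Lemma emb_inj x y : emb k x = emb k y -> x = y.
Proof. destruct k; [apply HtoO_inj | auto]. Qed.
Lemma emb_unit : emb k (unitA k) = RtoO 1.
Proof. destruct k; reflexivity. Qed.
Lemma vec_emb_Qv x : Qv S (vec k (emb k x)).
Proof. destruct k; [apply quatPart_HtoO | apply complex3_vecC]. Qed.
End Uniform.

(** * The geometry Γ_F(A) in coordinates *)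

Section Geometry.
Variable k : case.

Local Notation S := (space k).
Local Notation "a * b" := (kmul S a b).
Local Notation "0" := (kzero S).
Local Notation vsc := (vscale (kmul S)).
Local Notation v0 := (vzero (kzero S)).
Local Notation "⟪ a , b ⟫" := (form S a b).
Local Notation va x := (vec k (emb k x)).

Add Ring F_ring : (k_ring _ S).

Lemma ip_pure a b : re k a = 0 -> ip k a b = ⟪vec k a, vec k b⟫.
Proof. intro Ha. rewrite ip_coords, Ha, conj_zero. ring. Qed.

Lemma oscale_assoc u t s : oscale k (oscale k u t) s = oscale k u (t * s).
Proof.
  apply (coords_ext k).
  - rewrite !re_scale. ring.
  - rewrite !vec_scale. apply vsc_vsc.
Qed.

Lemma ascale_assoc x t s : ascale k (ascale k x t) s = ascale k x (t * s).
Proof. apply (emb_inj k). rewrite !emb_scale. apply oscale_assoc. Qed.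

Lemma pure_multiple a b t : re k a = 0 -> re k b = 0 -> vec k b = vsc (vec k a) t ->
  oscale k a t = b.
Proof.
  intros Ha Hb Hv. apply (coords_ext k).
  - rewrite re_scale, Ha, Hb. ring.
  - rewrite vec_scale. symmetry. exact Hv.
Qed.


Lemma line_set_rescale x u t : t <> fzero k ->
  line_set k (ascale k x t) (oscale k u t) = line_set k x u.
Proof.
  rewrite <- zero_space. intro Ht.
  apply functional_extensionality; intro a; apply functional_extensionality; intro b.
  apply propositional_extensionality. unfold line_set. rewrite <- zero_space.
  split.
  - intros (s & Hs & Ha & Hb). exists (t * s).
    rewrite <- ascale_assoc, <- oscale_assoc. repeat split; try assumption.
    intro Z. apply Hs. exact (mul_integral _ S t s Z Ht).
  - intros (s & Hs & Ha & Hb). exists (kinv S t * s).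
    assert (Hts : t * (kinv S t * s) = s).
    { transitivity ((t * kinv S t) * s); [ring | rewrite kinv_r by exact Ht; ring]. }
    rewrite ascale_assoc, oscale_assoc, Hts. repeat split; try assumption.
    intro Z. apply Hs. rewrite <- Hts, Z. ring.
Qed.

Lemma pt_set_rescale p t : t <> fzero k -> pt_set k (ascale k p t) = pt_set k p.
Proof.
  rewrite <- zero_space. intro Ht.
  apply functional_extensionality; intro a. apply propositional_extensionality.
  unfold pt_set. split.
  - intros (s & Ha). exists (t * s). rewrite <- ascale_assoc. exact Ha.
  - intros (s & Ha). exists (kinv S t * s). rewrite ascale_assoc.
    replace (t * (kinv S t * s)) with s; [exact Ha |].
    transitivity ((t * kinv S t) * s); [rewrite kinv_r by exact Ht; ring | ring].
Qed.

Lemma line_coords x u : is_line k x u ->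
  re k (emb k x) = 0 /\ re k u = 0 /\
  ⟪vec k u, vec k u⟫ = ⟪va x, va x⟫ /\ ⟪vec k u, vec k u⟫ <> 0.
Proof.
  intros (Hx & Hu & Hn & Hnz). apply pure_re in Hx, Hu.
  unfold onorm in Hn, Hnz. apply sqrt_inj in Hn; try apply realip_nonneg.
  rewrite <- !ip_pure by assumption. rewrite !ip_self, Hn.
  repeat split; try assumption.
  intro Z. apply Hnz. rewrite <- ofReal_zero in Z. apply ofReal_inj in Z.
  rewrite Z. apply sqrt_0.
Qed.

Lemma point_coords p : is_point k p -> re k (emb k p) = 0 /\ va p <> v0.
Proof.
  intros (Hp & Hnz). apply pure_re in Hp. split; [exact Hp |].
  intro Z. apply Hnz.
  apply (coords_ext k); [rewrite Hp, re_zero | rewrite Z, vec_zero]; reflexivity.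
Qed.

Lemma distinct_points_gram p q : is_point k p -> is_point k q -> pt_set k p <> pt_set k q ->
  gram _ S (va p) (va q) <> 0.
Proof.
  intros Pp Pq Hne HD. apply point_coords in Pp as (rp & np), Pq as (rq & nq).
  pose proof (gram_zero_multiple _ S (va p) (va q)
    (form_self_nonzero _ S _ np (vec_Pv k _)) (vec_Pv k _) (vec_Pv k _) HD) as Hpq.
  set (s := ⟪va p, va q⟫ * kinv S ⟪va p, va p⟫) in Hpq.
  assert (Hs : s <> fzero k).
  { rewrite <- zero_space. intro Z. apply nq. rewrite Hpq, Z. apply V_ext; cbn; ring. }
  apply Hne. rewrite <- (pt_set_rescale p s Hs). f_equal.
  apply (emb_inj k). rewrite emb_scale. apply pure_multiple; assumption.
Qed.

(** Two lines with equal Gram matrices and dependent first coordinates coincide: then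
    [y = x t] and [v = u t] for one scalar [t]. *)
Lemma dependent_lines_equal x y u v : is_line k x u -> is_line k y v ->
  ⟪vec k u, vec k v⟫ = ⟪va x, va y⟫ -> gram _ S (va x) (va y) = 0 ->
  line_set k x u = line_set k y v.
Proof.
  intros Lx Ly Gxy HD.
  destruct (line_coords x u Lx) as (rx & ru & Gxx & Hu).
  destruct (line_coords y v Ly) as (ry & rv & Gyy & Hv).
  assert (Hx : ⟪va x, va x⟫ <> 0) by (rewrite <- Gxx; exact Hu).
  assert (HDu : gram _ S (vec k u) (vec k v) = 0)
    by (rewrite (gram_eq _ S _ _ (va x) (va y)); assumption).
  pose proof (gram_zero_multiple _ S (va x) (va y) Hx (vec_Pv k _) (vec_Pv k _) HD) as Exy.
  pose proof (gram_zero_multiple _ S (vec k u) (vec k v) Hu (vec_Pv k _) (vec_Pv k _) HDu)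
    as Euv.
  rewrite Gxx, Gxy in Euv.
  set (t := ⟪va x, va y⟫ * kinv S ⟪va x, va x⟫) in Exy, Euv.
  assert (Ht : t <> fzero k).
  { rewrite <- zero_space. intro Z. apply Hv.
    rewrite Euv, Z, form_scalel, form_scaler, conj_zero. ring. }
  rewrite <- (line_set_rescale x u t Ht). f_equal.
  - apply (emb_inj k). rewrite emb_scale. apply pure_multiple; assumption.
  - apply pure_multiple; assumption.
Qed.

Lemma unit_mul : amul k (unitA k) (unitA k) = unitA k.
Proof.
  apply (emb_inj k). rewrite emb_mul, emb_unit. unfold_octonions.
  split_pairs; ring.
Qed.

(* a sharp morphism maps 1 to an idempotent of norm one, hence to 1 *)
Lemma sharp_unit phi : sharp k phi -> phi (unitA k) = RtoO 1.
Proof.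
  intros (_ & _ & Hmul & Hip). apply idempotent_unit.
  - rewrite <- Hmul, unit_mul. reflexivity.
  - apply (ofReal_inj k). rewrite <- ip_self, Hip. unfold ipA. rewrite emb_unit, ip_self.
    f_equal. unfold_octonions. ring.
Qed.

Section Span.
Variables x y : Aty k.
Hypotheses (rx : re k (emb k x) = 0) (ry : re k (emb k y) = 0).
Hypothesis Hgram : gram _ S (va x) (va y) <> 0.

Let c1 a := coord1 _ S (va x) (va y) (va a) * kinv S (gram _ S (va x) (va y)).
Let c2 a := coord2 _ S (va x) (va y) (va a) * kinv S (gram _ S (va x) (va y)).
Let c3 a := coord3 _ S (va x) (va y) (va a) * kinv S (gram _ S (va x) (va y)).

(** [1, x, y, x y] span [A]: the pure part of [x y] is [x × y]. *)
Lemma span_unit_x_y_xy a :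
  a = aadd k (aadd k (aadd k (ascale k (unitA k) (re k (emb k a))) (ascale k x (c1 a)))
                (ascale k y (c2 a)))
        (ascale k (aadd k (amul k x y) (ascale k (unitA k) ⟪va x, va y⟫)) (c3 a)).
Proof.
  apply (emb_inj k). rewrite !emb_add, !emb_scale, emb_add, emb_mul, emb_scale, emb_unit.
  apply (coords_ext k).
  - rewrite !re_add, !re_scale, re_add, re_mul, re_scale, re_one, rx, ry. ring.
  - rewrite !vec_add, !vec_scale, vec_add, vec_mul, vec_scale, vec_one, rx, ry, conj_zero.
    rewrite (cramer_inverse _ S (va x) (va y) (vec_emb_Qv k x) (vec_emb_Qv k y) Hgram
               (va a) (vec_emb_Qv k a)) at 1.
    unfold c1, c2, c3. apply V_ext; cbn; ring.
Qed.

Lemma sharp_determined phi psi : sharp k phi -> sharp k psi ->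
  phi x = psi x -> phi y = psi y -> phi = psi.
Proof.
  intros Hphi Hpsi Ex Ey. apply functional_extensionality. intro a.
  pose proof (sharp_unit phi Hphi) as U1. pose proof (sharp_unit psi Hpsi) as U2.
  destruct Hphi as (Aphi & Sphi & Mphi & _), Hpsi as (Apsi & Spsi & Mpsi & _).
  rewrite (span_unit_x_y_xy a).
  repeat first [rewrite Aphi | rewrite Sphi | rewrite Mphi].
  repeat first [rewrite Apsi | rewrite Spsi | rewrite Mpsi].
  rewrite U1, U2, Ex, Ey. reflexivity.
Qed.
End Span.

Definition liftMap (x y : Aty k) (u v : Oc) (a : Aty k) : Oc :=
  ofCoords k (re k (emb k a)) (extension _ S (va x) (va y) (vec k u) (vec k v) (va a)).

Section Lift.
Variables (x y : Aty k) (u v : Oc).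
Hypotheses (rx : re k (emb k x) = 0) (ry : re k (emb k y) = 0) (ru : re k u = 0) (rv : re k v = 0).
Hypotheses (Gxx : ⟪vec k u, vec k u⟫ = ⟪va x, va x⟫) (Gyy : ⟪vec k v, vec k v⟫ = ⟪va y, va y⟫).
Hypothesis Gxy : ⟪vec k u, vec k v⟫ = ⟪va x, va y⟫.
Hypothesis Hgram : gram _ S (va x) (va y) <> 0.

Local Notation L := (extension _ S (va x) (va y) (vec k u) (vec k v)).
Local Notation lift := (liftMap x y u v).

Ltac side := first [assumption | apply vec_emb_Qv | apply vec_Pv].

Lemma re_lift a : re k (lift a) = re k (emb k a).
Proof. apply re_ofCoords. Qed.
Lemma vec_lift a : vec k (lift a) = L (va a).
Proof. apply vec_ofCoords, extension_Pv; apply vec_Pv. Qed.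

Lemma lift_sharp : sharp k lift.
Proof.
  split; [| split; [| split]]; intros a b.
  - apply (coords_ext k).
    + rewrite re_add, !re_lift, emb_add, re_add. reflexivity.
    + rewrite vec_add, !vec_lift, emb_add, vec_add. apply extension_add.
  - apply (coords_ext k).
    + rewrite re_scale, !re_lift, emb_scale, re_scale. reflexivity.
    + rewrite vec_scale, !vec_lift, emb_scale, vec_scale. apply extension_scale.
  - apply (coords_ext k).
    + rewrite re_mul, !re_lift, !vec_lift, emb_mul, re_mul, extension_form; try side.
      reflexivity.
    + rewrite vec_mul, !re_lift, !vec_lift, emb_mul, vec_mul, !extension_add,
        !extension_scale, extension_cross; try side.
      reflexivity.
  - unfold ipA. rewrite !ip_coords, !re_lift, !vec_lift, extension_form; try side.
    reflexivity.
Qed.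

Lemma lift_x : lift x = u.
Proof.
  apply (coords_ext k).
  - rewrite re_lift, rx, ru. reflexivity.
  - rewrite vec_lift. apply extension_p; side.
Qed.

Lemma lift_y : lift y = v.
Proof.
  apply (coords_ext k).
  - rewrite re_lift, ry, rv. reflexivity.
  - rewrite vec_lift. apply extension_q; side.
Qed.
End Lift.

Lemma common_plane_ip phi x y u v : sharp k phi -> phi x = u -> phi y = v ->
  ipA k x y = ip k u v.
Proof. intros (_ & _ & _ & Hip) Hx Hy. rewrite <- Hip, Hx, Hy. reflexivity. Qed.

Lemma coplanar_unique_plane x y u v : is_line k x u -> is_line k y v ->
  line_set k x u <> line_set k y v -> ipA k x y = ip k u v ->
  exists! phi : Aty k -> Oc, sharp k phi /\ phi x = u /\ phi y = v.
Proof.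
  intros Lx Ly Hne Hip.
  destruct (line_coords x u Lx) as (rx & ru & Gxx & Hu).
  destruct (line_coords y v Ly) as (ry & rv & Gyy & Hv).
  assert (Gxy : ⟪vec k u, vec k v⟫ = ⟪va x, va y⟫).
  { rewrite <- !ip_pure by assumption. symmetry. exact Hip. }
  assert (Hgram : gram _ S (va x) (va y) <> 0)
    by (intro HD; apply Hne, dependent_lines_equal; assumption).
  exists (liftMap x y u v). split.
  - split; [apply lift_sharp | split; [apply lift_x | apply lift_y]]; assumption.
  - intros psi (Hpsi & Hx & Hy).
    apply (sharp_determined x y); try assumption.
    + apply lift_sharp; assumption.
    + rewrite Hx. apply lift_x; assumption.
    + rewrite Hy. apply lift_y; assumption.
Qed.

(** Two lines through two distinct points are incident with the same points: both first
    coordinates span the orthogonal complement of the two points in Pu_F(A). *)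
Lemma lines_through_two_points x y u v p q :
  is_line k x u -> is_line k y v ->
  is_point k p -> is_point k q -> pt_set k p <> pt_set k q ->
  pt_line_inc k p x u -> pt_line_inc k p y v ->
  pt_line_inc k q x u -> pt_line_inc k q y v ->
  forall r : Aty k, is_point k r -> (pt_line_inc k r x u <-> pt_line_inc k r y v).
Proof.
  intros Lx Ly Pp Pq Hne Ipx Ipy Iqx Iqy r _.
  destruct (line_coords x u Lx) as (rx & _ & Gxx & Hu).
  destruct (line_coords y v Ly) as (ry & _ & Gyy & Hv).
  pose proof (distinct_points_gram p q Pp Pq Hne) as Hgram.
  unfold pt_line_inc, ipA in *. rewrite <- zero_space in *. rewrite !ip_pure in * by assumption.
  assert (nx : va x <> v0) by (intro Z; apply Hu; rewrite Gxx, Z; apply form_zero_l).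
  assert (ny : va y <> v0) by (intro Z; apply Hv; rewrite Gyy, Z; apply form_zero_l).
  apply (orthogonal_same_perp _ S (va p) (va q)); try assumption; apply vec_emb_Qv.
Qed.
End Geometry.

Theorem mainTheorem2 (k : case) :
  (* (1) coplanarity of two distinct lines *)
  (forall (x y : Aty k) (u v : Oc),
     is_line k x u -> is_line k y v ->
     line_set k x u <> line_set k y v ->
     ((exists phi : Aty k -> Oc,
         sharp k phi /\ line_plane_inc k x u phi /\ line_plane_inc k y v phi)
        <-> ipA k x y = ip k u v) /\
     (ipA k x y = ip k u v ->
        exists! phi : Aty k -> Oc,
          sharp k phi /\ phi x = u /\ phi y = v) /\
     (ipA k x y = ip k u v ->
        exists! phi : Aty k -> Oc,
          sharp k phi /\ line_plane_inc k x u phi /\ line_plane_inc k y v phi))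
  /\
  (* (2) two lines sharing two distinct points share all points *)
  (forall (x y : Aty k) (u v : Oc) (p q : Aty k),
     is_line k x u -> is_line k y v ->
     is_point k p -> is_point k q -> pt_set k p <> pt_set k q ->
     pt_line_inc k p x u -> pt_line_inc k p y v ->
     pt_line_inc k q x u -> pt_line_inc k q y v ->
     forall r : Aty k, is_point k r ->
       (pt_line_inc k r x u <-> pt_line_inc k r y v)).
Proof.
  split.
  - intros x y u v Lx Ly Hne.
    pose proof (coplanar_unique_plane k x y u v Lx Ly Hne) as Hunique.
    split; [split | split].
    + intros (phi & Hphi & Hx & Hy). exact (common_plane_ip k phi x y u v Hphi Hx Hy).
    + intro Hip. destruct (Hunique Hip) as (phi & Hphi & _). exists phi. exact Hphi.
    + exact Hunique.
    + exact Hunique.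
  - exact (lines_through_two_points k).
Qed.
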